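(* Let $q$ be a prime power. (i) Let $C$ be an $[n,k,d]$ linear code over $\mathbb{F}_q$ whose Euclidean hull $C\cap C^{\perp_E}$ has dimension $l$. If $l<d$, then there exists a set $T$ of $l$ coordinate positions such that the punctured code $C^T$ of $C$ on $T$ is a Euclidean LCD $[n-l,k,d^*]$ code with $d^*\ge d-l$. (ii) The same holds for an $[n,k,d]$ linear code over $\mathbb{F}_{q^2}$ whose Hermitian hull $C\cap C^{\perp_H}$ has dimension $l$, with ''Euclidean LCD'' replaced by ''Hermitian LCD''.
   Context: An $[n,k,d]$ linear code over a finite field $F$ is a $k$-dimensional subspace of $F^n$ with minimum nonzero Hamming weight $d$. Euclidean inner product on $\mathbb{F}_q^n$: $\langle x,y\rangle_E=\sum x_iy_i$; Hermitian inner product on $\mathbb{F}_{q^2}^n$: $\langle x,y\rangle_H=\sum x_iy_i^q$; $C^{\perp_E},C^{\perp_H}$ are the corresponding duals. The hull of $C$ is $C\cap C^{\perp}$; $C$ is LCD if its hull is $\{0\}$. For a set $T$ of coordinate positions, the punctured code $C^T$ is obtained by deleting the coordinates in $T$ from every codeword of $C$. *)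

From HB Require Import structures.
From mathcomp Require Import all_boot all_order all_algebra.
Set Implicit Arguments. Unset Strict Implicit. Unset Printing Implicit Defensive.
Import GRing.Theory.
Local Open Scope ring_scope.

Section Codes.
Variable F : finFieldType.

Definition wt n (x : 'rV[F]_n) : nat := #|[set i | x 0 i != 0]|.

Definition min_dist n (C : {vspace 'rV[F]_n}) (d : nat) : Prop :=
  (exists2 x, x \in C & (x != 0) /\ wt x = d) /\
  (forall x, x \in C -> x != 0 -> (d <= wt x)%N).

Definition ipE n (x y : 'rV[F]_n) : F := \sum_i x 0 i * y 0 i.
(* Hermitian inner product on F_{q^2}^n : sum x_i y_i^q *)
Definition ipH (q : nat) n (x y : 'rV[F]_n) : F := \sum_i x 0 i * (y 0 i) ^+ q.

Definition dual_wrt n (form : 'rV[F]_n -> 'rV[F]_n -> F) (C : {vspace 'rV[F]_n})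
  : {vspace 'rV[F]_n} :=
  <<[seq y <- enum 'rV[F]_n | [forall x : 'rV[F]_n, (x \in C) ==> (form x y == 0%R)]]>>%VS.

Definition dualE n (C : {vspace 'rV[F]_n}) := dual_wrt (@ipE n) C.
Definition dualH (q : nat) n (C : {vspace 'rV[F]_n}) := dual_wrt (@ipH q n) C.

Definition hullE n (C : {vspace 'rV[F]_n}) := (C :&: dualE C)%VS.
Definition hullH q n (C : {vspace 'rV[F]_n}) := (C :&: dualH q C)%VS.

(* puncturing: delete the coordinates in T (remaining ones kept in increasing order) *)
Definition punct_vec n (T : {set 'I_n}) (x : 'rV[F]_n) : 'rV[F]_#|~: T| :=
  \row_(j < #|~: T|) x 0 (enum_val j).

Definition puncture n (T : {set 'I_n}) (C : {vspace 'rV[F]_n}) : {vspace 'rV[F]_#|~: T|} :=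
  (linfun (punct_vec T) @: C)%VS.

End Codes.

(* Let H be the hull of C and l = dim H.  Pick an information set T of H: l
   coordinates such that restriction to T maps H bijectively onto F^T.
   A nonzero codeword of C supported on T would have weight <= l < d, so
   puncturing on T is injective on C and lowers weights by at most l.
   If the punctured image of c lies in the hull of the punctured code, then
   pairing c with the codewords of H that restrict to unit vectors on T shows
   that c vanishes on T; hence c is orthogonal to all of C, i.e. c lies in H, and a codeword of H
   vanishing on T is zero. *)

From HB Require Import structures.
From mathcomp Require Import all_boot all_order all_algebra all_field.
Set Implicit Arguments. Unset Strict Implicit. Unset Printing Implicit Defensive.
Import GRing.Theory.
Local Open Scope ring_scope.

Lemma card_setC_ord n (A : {set 'I_n}) : #|~: A| = (n - #|A|)%N.
Proof. by rewrite -[n in (n - _)%N]card_ord -(cardsC A) addKn. Qed.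

Section Restriction.
Variable F : finFieldType.

Definition restrict n (A : {set 'I_n}) (x : 'rV[F]_n) : 'rV[F]_#|A| :=
  \row_(j < #|A|) x 0 (enum_val j).

Fact restrict_is_linear n (A : {set 'I_n}) : linear (@restrict n A).
Proof. by move=> a x y; apply/rowP=> j; rewrite !mxE. Qed.
HB.instance Definition _ n A := GRing.isLinear.Build F 'rV[F]_n _ _ (@restrict n A)
  (@restrict_is_linear n A).

Fact punct_vec_is_linear n (T : {set 'I_n}) : linear (@punct_vec F n T).
Proof. exact: (@restrict_is_linear n (~: T)). Qed.
HB.instance Definition _ n T := GRing.isLinear.Build F 'rV[F]_n _ _ (@punct_vec F n T)
  (@punct_vec_is_linear n T).

Lemma restrict_eq0 n (A : {set 'I_n}) x :
  (restrict A x == 0) = [forall i in A, x 0 i == 0].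
Proof.
apply/eqP/forall_inP => [/rowP x0 i iA|x0].
  by move: (x0 (enum_rank_in iA i)); rewrite !mxE enum_rankK_in // => ->.
by apply/rowP=> j; rewrite !mxE; apply/eqP/x0/enum_valP.
Qed.

Lemma mem_puncture n (T : {set 'I_n}) (C : {vspace 'rV[F]_n}) y :
  reflect (exists2 c, c \in C & y = punct_vec T c) (y \in puncture T C).
Proof. by apply: (iffP memv_imgP) => -[c cC ->]; exists c; rewrite ?lfunE. Qed.

Lemma wt0 n : wt (0 : 'rV[F]_n) = 0%N.
Proof. by apply/eqP; rewrite cards_eq0; apply/eqP/setP=> i; rewrite !inE mxE eqxx. Qed.

Lemma wt_le_punct n (T : {set 'I_n}) (x : 'rV[F]_n) :
  (wt x <= wt (punct_vec T x) + #|T|)%N.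
Proof.
rewrite /wt addnC -(card_imset _ (@enum_val_inj _ (mem (~: T)))).
apply: leq_trans (leq_card_setU _ _); apply: subset_leq_card.
apply/subsetP=> i; rewrite inE => xi; rewrite inE.
have [//|iT] := boolP (i \in T); have iCT : i \in ~: T by rewrite inE.
apply/imsetP; exists (enum_rank_in iCT i); last by rewrite enum_rankK_in.
by rewrite inE mxE enum_rankK_in.
Qed.

Lemma min_dist_exists n (C : {vspace 'rV[F]_n}) : C != 0%VS -> exists d, min_dist C d.
Proof.
move=> Cn0; have ex : exists m, [exists x, [&& x \in C, x != 0 & wt x == m]].
  by exists (wt (vpick C)); apply/existsP; exists (vpick C); rewrite memv_pick vpick0 Cn0 eqxx.
have [m /existsP[y /and3P[yC yn0 /eqP wy]] minm] := ex_minnP ex.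
exists m; split=> [|x xC xn0]; first by exists y.
by apply: minm; apply/existsP; exists x; rewrite xC xn0 eqxx.
Qed.

Definition vanishing n (H : {vspace 'rV[F]_n}) (A : {set 'I_n}) :=
  (H :&: lker (linfun (restrict A)))%VS.

Lemma mem_vanishing n H (A : {set 'I_n}) x :
  (x \in vanishing H A) = (x \in H) && [forall i in A, x 0 i == 0].
Proof. by rewrite memv_cap memv_ker lfunE /= restrict_eq0. Qed.

Lemma vanishing_setU1 n H (A : {set 'I_n}) i :
  vanishing H (i |: A) = (vanishing H A :&: lker (linfun (restrict [set i])))%VS.
Proof.
apply/vspaceP=> y; rewrite memv_cap memv_ker lfunE /= restrict_eq0 !mem_vanishing.
rewrite -andbA; congr (_ && _).
apply/forall_inP/andP => [y0|[/forall_inP y0A /forall_inP y0i] j].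
  by split; apply/forall_inP=> j jA; apply: y0; rewrite !inE ?jA ?orbT // (set1P jA) eqxx.
by case/setU1P=> [->|/y0A//]; apply: y0i; rewrite set11.
Qed.

Lemma dim_vanishing_setU1 n H (A : {set 'I_n}) i x :
  x \in vanishing H A -> x 0 i != 0 ->
  \dim (vanishing H (i |: A)) = (\dim (vanishing H A)).-1.
Proof.
move=> xV xi; set f := linfun (restrict [set i]).
have img1 : \dim (f @: vanishing H A) = 1%N.
  apply/eqP; rewrite eqn_leq; apply/andP; split.
    by rewrite (leq_trans (dimvS (subvf _))) // dimvf dim_matrix cards1.
  rewrite lt0n dimv_eq0; apply: contraNneq xi => img0.
  have := memv_img f xV; rewrite img0 memv0 lfunE /= restrict_eq0.
  by move=> /forall_inP/(_ i (set11 i)).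
by rewrite vanishing_setU1 -(limg_ker_dim f (vanishing H A)) img1 addn1.
Qed.

Lemma vanishing_set0 n (H : {vspace 'rV[F]_n}) : vanishing H set0 = H.
Proof.
apply/vspaceP=> y; rewrite mem_vanishing andb_idr // => _.
by apply/forall_inP=> i; rewrite inE.
Qed.

Lemma exists_vanishing_dim n (H : {vspace 'rV[F]_n}) m : (m <= \dim H)%N ->
  exists A : {set 'I_n}, #|A| = m /\ \dim (vanishing H A) = (\dim H - m)%N.
Proof.
elim: m => [|m IHm] ltmH; first by exists set0; rewrite cards0 vanishing_set0 subn0.
have [A [cardA dimA]] := IHm (ltnW ltmH).
have : vanishing H A != 0%VS by rewrite -dimv_eq0 dimA subn_eq0 -ltnNge.
rewrite -vpick0; set x := vpick _ => xn0; have xV : x \in vanishing H A := memv_pick _.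
have [i xi] : exists i, x 0 i != 0.
  apply/existsP; apply: contraNT xn0; rewrite negb_exists => /forallP x0.
  by apply/eqP/rowP=> i; rewrite mxE; apply/eqP/negbNE/x0.
have iA : i \notin A.
  by apply: contraNN xi; move: xV; rewrite mem_vanishing => /andP[_ /forall_inP]; apply.
by exists (i |: A); rewrite cardsU1 iA cardA (dim_vanishing_setU1 xV xi) dimA subnS.
Qed.

Lemma exists_information_set n (H : {vspace 'rV[F]_n}) :
  exists A : {set 'I_n},
    [/\ #|A| = \dim H, vanishing H A = 0%VS & (linfun (restrict A) @: H)%VS = fullv].
Proof.
have [A [cardA]] := exists_vanishing_dim (leqnn (\dim H)).
rewrite subnn => /eqP; rewrite dimv_eq0 => /eqP V0; exists A; split=> //.
by apply/eqP; rewrite eqEdim subvf dimvf dim_matrix limg_dim_eq // cardA mul1r /=.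
Qed.

End Restriction.

Section Puncture.
Variables (F : finFieldType) (n d : nat) (C : {vspace 'rV[F]_n}) (T : {set 'I_n}).
Hypotheses (Cd : min_dist C d) (Td : (#|T| < d)%N).

Lemma punct_vec_eq0 c : c \in C -> punct_vec T c = 0 -> c = 0.
Proof.
move=> cC c0; apply: contraTeq Td => cn0; rewrite -leqNgt.
by apply: leq_trans (Cd.2 c cC cn0) _; have := wt_le_punct T c; rewrite c0 wt0 add0n.
Qed.

Lemma dim_puncture : \dim (puncture T C) = \dim C.
Proof.
apply: limg_dim_eq; apply/eqP; rewrite -subv0; apply/subvP=> c.
by rewrite memv_cap memv_ker lfunE => /andP[cC /eqP/(punct_vec_eq0 cC)->]; rewrite mem0v.
Qed.

Lemma min_dist_puncture :
  exists2 d', min_dist (puncture T C) d' & (d - #|T| <= d')%N.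
Proof.
have [[x xC [xn0 _]] _] := Cd.
have [|d' Pd'] := @min_dist_exists _ _ (puncture T C).
  apply/eqP=> P0; have : punct_vec T x \in puncture T C by apply/mem_puncture; exists x.
  by rewrite P0 memv0 => /eqP/(punct_vec_eq0 xC)/eqP; apply/negP.
exists d' => //; have [[_ /mem_puncture[c cC ->] [yn0 <-]] _] := Pd'.
have cn0 : c != 0 by apply: contraNneq yn0 => ->; rewrite linear0.
by rewrite leq_subLR addnC (leq_trans (Cd.2 c cC cn0)) ?wt_le_punct.
Qed.

End Puncture.

Section Sesquilinear.
Variables (F : finFieldType) (s : F -> F).
Hypotheses (sD : {morph s : a b / a + b}) (sM : {morph s : a b / a * b}) (sK : involutive s).

(* [s = id] gives the Euclidean form, [s = (.)^q] on a field of order q^2 the Hermitian one. *)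
Definition sesq n (x y : 'rV[F]_n) : F := \sum_i x 0 i * s (y 0 i).

Definition hull n (C : {vspace 'rV[F]_n}) := (C :&: dual_wrt (@sesq n) C)%VS.

Lemma conj0 : s 0 = 0.
Proof. by apply: (addrI (s 0)); rewrite -sD !addr0. Qed.

Lemma sesqC n (x y : 'rV[F]_n) : sesq y x = s (sesq x y).
Proof.
rewrite /sesq (big_morph s sD conj0); apply: eq_bigr => i _.
by rewrite sM sK mulrC.
Qed.

Lemma sesq0r n (x : 'rV[F]_n) : sesq x 0 = 0.
Proof. by rewrite /sesq big1 // => i _; rewrite mxE conj0 mulr0. Qed.

Lemma sesq_semilinear n (x y z : 'rV[F]_n) a :
  sesq x (a *: y + z) = s a * sesq x y + sesq x z.
Proof.
rewrite /sesq mulr_sumr -big_split /=; apply: eq_bigr => i _.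
by rewrite !mxE sD sM mulrDr mulrCA.
Qed.

Lemma mem_dual n (C : {vspace 'rV[F]_n}) y :
  reflect (forall x, x \in C -> sesq x y = 0) (y \in dual_wrt (@sesq n) C).
Proof.
apply: (iffP idP) => [yD x xC|y_orth]; last first.
  apply: memv_span; rewrite mem_filter mem_enum andbT.
  by apply/forallP=> x; apply/implyP=> xC; apply/eqP/y_orth.
move: yD; rewrite /dual_wrt; set S := [seq _ <- _ | _] => yD.
rewrite (coord_span (X := in_tuple S) yD).
elim/big_ind: _ => [|u v u0 v0|i _]; first exact: sesq0r.
  by have := sesq_semilinear x u v 1; rewrite scale1r u0 v0 mulr0 addr0.
have := sesq_semilinear x S`_i 0 (coord (in_tuple S) i y); rewrite sesq0r !addr0 => ->.
have : S`_i \in S by apply: mem_nth.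
by rewrite mem_filter => /andP[/forallP/(_ x)/implyP/(_ xC)/eqP -> _]; rewrite mulr0.
Qed.

Lemma sesq_punct_restrict n (T : {set 'I_n}) (x y : 'rV[F]_n) :
  sesq x y = sesq (punct_vec T x) (punct_vec T y) + sesq (restrict T x) (restrict T y).
Proof.
rewrite /sesq (bigID (mem (~: T))) /=; congr (_ + _).
  by rewrite big_enum_val; apply: eq_bigr => j _; rewrite !mxE.
rewrite (eq_bigl (mem T)) => [|i]; last by rewrite inE negbK.
by rewrite big_enum_val; apply: eq_bigr => j _; rewrite !mxE.
Qed.

Lemma sesq_nondegenerate n (y : 'rV[F]_n) : (forall v, sesq v y = 0) -> y = 0.
Proof.
move=> y_orth; apply/rowP=> j; rewrite mxE -[y 0 j]sK -conj0 -(y_orth (delta_mx 0 j)).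
rewrite /sesq (bigD1 j) //= big1 => [|i ij]; first by rewrite !mxE !eqxx mul1r addr0.
by rewrite mxE (negbTE ij) andbF mul0r.
Qed.

Lemma hull_puncture_eq0 n (C : {vspace 'rV[F]_n}) (T : {set 'I_n}) :
  vanishing (hull C) T = 0%VS -> (linfun (restrict T) @: hull C)%VS = fullv ->
  hull (puncture T C) = 0%VS.
Proof.
move=> V0 onto; apply/eqP; rewrite -subv0; apply/subvP=> _ /memv_capP[/mem_puncture[c cC ->]].
move=> /mem_dual c_orth.
have c_orthP x : x \in C -> sesq (punct_vec T x) (punct_vec T c) = 0.
  by move=> xC; apply: c_orth; apply/mem_puncture; exists x.
have cT0 : restrict T c = 0.
  apply: sesq_nondegenerate => v; have := memvf v; rewrite -onto => /memv_imgP[h hH ->].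
  have /memv_capP[hC /mem_dual h_orth] := hH.
  have := sesq_punct_restrict T h c; rewrite sesqC h_orth // conj0 c_orthP //.
  by rewrite add0r lfunE => <-.
have cH : c \in hull C.
  rewrite memv_cap cC; apply/mem_dual => x xC.
  by rewrite (sesq_punct_restrict T) cT0 sesq0r c_orthP // addr0.
have /eqP-> : c == 0 by rewrite -memv0 -V0 mem_vanishing cH -restrict_eq0 cT0 eqxx.
by rewrite linear0 mem0v.
Qed.

Theorem exists_lcd_puncture n k d l (C : {vspace 'rV[F]_n}) :
  \dim C = k -> min_dist C d -> \dim (hull C) = l -> (l < d)%N ->
  exists T : {set 'I_n},
    [/\ #|T| = l, #|~: T| = (n - l)%N,
        hull (puncture T C) = 0%VS,
        \dim (puncture T C) = k &
        exists2 dstar : nat, min_dist (puncture T C) dstar & (d - l <= dstar)%N].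
Proof.
move=> <- Cd <-; have [T [cardT V0 onto]] := exists_information_set (hull C).
rewrite -cardT => Td; exists T; split=> //.
- by rewrite card_setC_ord.
- exact: hull_puncture_eq0.
- exact: dim_puncture Cd Td.
- exact: min_dist_puncture.
Qed.

End Sesquilinear.

Lemma pchar_nat_card (F : finFieldType) : [pchar F].-nat #|F|.
Proof.
have [p p_pr pcharFp] := finPcharP F.
by rewrite (card_pprimeChar pcharFp) pnatX (pnatE _ p_pr) pcharFp.
Qed.

Section SqrtCardPower.
Variables (F : finFieldType) (q : nat).
Hypothesis cardF : #|F| = (q ^ 2)%N.

Lemma exprD_sqrt_card : {morph (fun a : F => a ^+ q) : a b / a + b}.
Proof.
move=> a b /=; apply/exprDn_pchar/(pnat_dvd _ (pchar_nat_card F)).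
by rewrite cardF dvdn_exp.
Qed.

Lemma expr_sqrt_cardK : involutive (fun a : F => a ^+ q).
Proof. by move=> a /=; rewrite -exprM mulnn -cardF expf_card. Qed.

End SqrtCardPower.

Theorem theorem3p3 :
  (* (i) Euclidean case over F_q, q = #|F| *)
  (forall (F : finFieldType) (n k d l : nat) (C : {vspace 'rV[F]_n}),
      \dim C = k -> min_dist C d -> \dim (hullE C) = l -> (l < d)%N ->
      exists T : {set 'I_n},
        [/\ #|T| = l, #|~: T| = (n - l)%N,
            hullE (puncture T C) = 0%VS,
            \dim (puncture T C) = k &
            exists2 dstar : nat, min_dist (puncture T C) dstar & (d - l <= dstar)%N])
  /\
  (* (ii) Hermitian case over F_{q^2} *)
  (forall (F : finFieldType) (q : nat), #|F| = (q ^ 2)%N ->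
   forall (n k d l : nat) (C : {vspace 'rV[F]_n}),
      \dim C = k -> min_dist C d -> \dim (hullH q C) = l -> (l < d)%N ->
      exists T : {set 'I_n},
        [/\ #|T| = l, #|~: T| = (n - l)%N,
            hullH q (puncture T C) = 0%VS,
            \dim (puncture T C) = k &
            exists2 dstar : nat, min_dist (puncture T C) dstar & (d - l <= dstar)%N]).
Proof.
split=> [F|F q cardF].
  exact: (@exists_lcd_puncture F id (fun _ _ => erefl) (fun _ _ => erefl) (fun _ => erefl)).
exact: (@exists_lcd_puncture F (fun a => a ^+ q) (exprD_sqrt_card cardF)
          (exprMn q) (expr_sqrt_cardK cardF)).
Qed.
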